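(* Let $(\mathbf X,\mathbf Y)$ be a general correlated source which is uniformly integrable. Then \[\limsup_{n\to\infty}\frac1n H(X^n|Y^n)\le\overline H_s(\mathbf X|\mathbf Y)\le\overline H(\mathbf X|\mathbf Y).\]
   Context: A general correlated source $(\mathbf X,\mathbf Y)=\{(X^n,Y^n)\}_{n\ge1}$ is an arbitrary sequence of pairs of random variables on $\mathcal X^n\times\mathcal Y^n$, $\mathcal X,\mathcal Y$ finite or countably infinite (no structural assumptions; marginal probabilities positive). Logs base 2. $H(X^n|Y^n)$ is the conditional entropy. The source is uniformly integrable if $Z_n=\frac1n\log\frac1{P_{X^n|Y^n}(X^n|Y^n)}$ satisfies $\lim_{u\to\infty}\sup_n\sum_{z:|z|\ge u}P_{Z_n}(z)|z|=0$. $\overline H(\mathbf X|\mathbf Y)=\inf\{\alpha:\lim_n\Pr\{\frac1n\log\frac1{P_{X^n|Y^n}(X^n|Y^n)}>\alpha\}=0\}$. For $x^n$ and $\varepsilon\in(0,1]$, $\overline h^\varepsilon(x^n)=\inf\{a\in\mathbb R:\sum_{y^n:\log(1/P_{X^n|Y^n}(x^n|y^n))>a}P_{Y^n|X^n}(y^n|x^n)\le\varepsilon\}$; $\overline H_s^\varepsilon(X^n|Y^n)=\sum_{x^n}P_{X^n}(x^n)\overline h^\varepsilon(x^n)$; $\overline H_s(\mathbf X|\mathbf Y)=\lim_{\varepsilon\downarrow0}\limsup_n\frac1n\overline H_s^\varepsilon(X^n|Y^n)$. *)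

From HB Require Import structures.
From mathcomp Require Import all_boot all_order all_algebra.
From mathcomp Require Import all_classical all_reals all_analysis.
Set Implicit Arguments.
Unset Strict Implicit.
Unset Printing Implicit Defensive.
Import Order.TTheory GRing.Theory Num.Theory.
Import numFieldNormedType.Exports.
Local Open Scope classical_set_scope.
Local Open Scope ring_scope.

Section Source.
Variables (R : realType) (X Y : countType).
(* A general correlated source: for each n, the joint pmf of (X^n, Y^n)
   on X^n x Y^n (the component n = 0 is irrelevant). *)
Variable P : forall n : nat, n.-tuple X * n.-tuple Y -> R.

Definition log2 (x : R) : R := ln x / ln 2.

Definition is_source : Prop :=
  forall n, (forall p, 0 <= @P n p) /\
            \esum_(p in [set: n.-tuple X * n.-tuple Y]) (@P n p)%:E = 1%E.

Definition PX n (x : n.-tuple X) : R :=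
  fine (\esum_(y in [set: n.-tuple Y]) (@P n (x, y))%:E).
Definition PY n (y : n.-tuple Y) : R :=
  fine (\esum_(x in [set: n.-tuple X]) (@P n (x, y))%:E).

Definition marginals_positive : Prop :=
  forall n : nat, (forall x : n.-tuple X, 0 < PX x) /\ (forall y : n.-tuple Y, 0 < PY y).

Definition PXgY n (x : n.-tuple X) (y : n.-tuple Y) : R := @P n (x, y) / PY y.
Definition PYgX n (y : n.-tuple Y) (x : n.-tuple X) : R := @P n (x, y) / PX x.

Definition Zfun n (p : n.-tuple X * n.-tuple Y) : R :=
  n%:R^-1 * log2 (1 / PXgY p.1 p.2).

Definition PZ n (z : R) : \bar R :=
  \esum_(p in [set p | Zfun p = z]) (@P n p)%:E.

Definition uniformly_integrable : Prop :=
  (fun u : R => ereal_sup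
     [set \esum_(z in [set z : R | u <= `|z|]) (PZ n z * (`|z|)%:E)%E
     | n in [set n : nat | (0 < n)%N]]) @ +oo --> 0%E.

Definition condH n : \bar R :=
  \esum_(p in [set: n.-tuple X * n.-tuple Y])
     (@P n p * log2 (1 / PXgY p.1 p.2))%:E.

Definition Hbar : \bar R :=
  ereal_inf [set a%:E | a in [set a : R |
     (fun n => \esum_(p in [set p | a < Zfun p]) (@P n p)%:E) @ \oo --> 0%E]].

Definition hbar_eps n (eps : R) (x : n.-tuple X) : \bar R :=
  ereal_inf [set a%:E | a in [set a : R |
     (\esum_(y in [set y | (a < log2 (1 / PXgY x y))%R]) (PYgX y x)%:E
        <= eps%:E)%E]].

Definition Hs_eps n (eps : R) : \bar R :=
  \esum_(x in [set: n.-tuple X]) ((PX x)%:E * hbar_eps eps x)%E.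

Definition Hs : \bar R :=
  lim ((limn_esup (fun n => (n%:R^-1)%:E * Hs_eps n eps)%E) @[eps --> 0^'+]).

End Source.

(* Write L(x,y) = log(1/P(x|y)), so that L = n Z_n on blocks of length n, and call
   a real a admissible for x when P(L > a | X = x) <= eps; hbar^eps(x) is the
   infimum of the admissible levels.  Splitting the conditional expectation of L
   at an admissible level a_x gives
     H(X^n|Y^n) <= sum_x P(x) a_x + E[L; L > a_X],
   and the event {L > a_X} has probability at most eps.  Uniform integrability
   bounds E[Z_n; B] by u P(B) + sup_m E[|Z_m|; |Z_m| >= u] for every event B, so
   taking a_x close to hbar^eps(x) yields the first inequality.  For the second,
   fix a with P(Z_n > a) -> 0: the level n a is admissible except on the x whose
   conditional tail exceeds eps; these have probability at most P(Z_n > a) / eps,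
   and on them Markov's inequality bounds P(x) hbar^eps(x) by E[L; X = x] / eps,
   so uniform integrability makes their contribution vanish.  Both bounds are
   passed to the limit through the monotonicity of hbar^eps in eps. *)

From HB Require Import structures.
From mathcomp Require Import all_boot all_order all_algebra.
From mathcomp Require Import all_classical all_reals all_analysis.
From mathcomp.algebra_tactics Require Import lra.
Import Order.TTheory GRing.Theory Num.Theory.
Local Open Scope classical_set_scope.
Local Open Scope ring_scope.

Set Implicit Arguments.
Unset Strict Implicit.
Unset Printing Implicit Defensive.

Section esum_lemmas.
Context {R : realType}.
Local Open Scope ereal_scope.

Lemma subset_le_esum (T : choiceType) (A B : set T) (a : T -> \bar R) :
  A `<=` B -> (forall x, B x -> 0 <= a x) ->
  \esum_(i in A) a i <= \esum_(i in B) a i.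
Proof.
move=> AB a0; rewrite esum_mkcond [leRHS]esum_mkcond.
apply: le_esum => i _; case: ifPn => iA.
  by rewrite ifT // inE; apply: AB; rewrite -inE.
by case: ifPn => // /[!inE] /a0.
Qed.

Lemma ge0_esumZl (T : choiceType) (S : set T) (a : T -> \bar R) (c : R) :
  (0 <= c)%R -> (forall x, S x -> 0 <= a x) ->
  \esum_(i in S) (c%:E * a i) = c%:E * \esum_(i in S) a i.
Proof.
move=> c0 a0; have [c_gt0|] := ltP 0%R c; last first.
  move=> cle; have -> : c = 0%R by apply/eqP; rewrite eq_le cle c0.
  by rewrite mul0e esum1 // => i _; rewrite mul0e.
rewrite [in LHS]/esum [in RHS]/esum -ereal_sup_pZl //; congr ereal_sup.
have sumZ A : A `<=` S -> finite_set A ->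
    \sum_(x \in A) (c%:E * a x) = c%:E * \sum_(x \in A) a x.
  move=> AS finA; rewrite !fsbig_finite //= big_seq [in RHS]big_seq.
  by rewrite ge0_sume_distrr // => i; rewrite in_fset_set // inE => /AS/a0.
apply/seteqP; split.
  move=> _ [A [finA AS] <-]; rewrite sumZ //.
  by exists (\sum_(x \in A) a x) => //; exists A.
by move=> _ [_ [A [finA AS] <-] <-]; exists A; rewrite ?sumZ.
Qed.

Lemma esum_pair_cond (T1 T2 : choiceType) (C : T1 * T2 -> Prop)
    (g : T1 * T2 -> \bar R) : (forall p, 0 <= g p) ->
  \esum_(p in [set p | C p]) g p =
  \esum_(x in [set: T1]) \esum_(y in [set y | C (x, y)]) g (x, y).
Proof.
move=> g0; rewrite (esum_esum (a := fun x y => g (x, y))) //.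
have -> : [set: T1] `*`` (fun x => [set y | C (x, y)]) = [set p | C p].
  by apply/seteqP; split => [[x y] []|[x y] Cxy].
by apply: eq_esum => -[x y].
Qed.

Lemma esum_pair_condl (T1 T2 : choiceType) (S : set T1) (g : T1 * T2 -> \bar R) :
  (forall p, 0 <= g p) ->
  \esum_(p in [set p | S p.1]) g p = \esum_(x in S) \esum_(y in [set: T2]) g (x, y).
Proof.
move=> g0; rewrite (esum_esum (a := fun x y => g (x, y))) //.
have -> : S `*`` (fun=> [set: T2]) = [set p | S p.1].
  by apply/seteqP; split => [[x y] []|[x y] Sx].
by apply: eq_esum => -[x y].
Qed.

Lemma pmulVeDr (c : R) (x y : \bar R) : (0 < c)%R -> 0 <= x -> 0 <= y ->
  (c^-1)%:E * (x + c%:E * y) = (c^-1)%:E * x + y.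
Proof.
move=> c_gt0 x_ge0 y_ge0.
rewrite ge0_muleDr ?mule_ge0 ?lee_fin ?(ltW c_gt0) // muleA -EFinM.
by rewrite mulVf ?gt_eqF // mul1e.
Qed.

End esum_lemmas.

Section limn_esup_lemmas.
Context {R : realType}.
Local Open Scope ereal_scope.
Implicit Types (u v : (\bar R)^nat) (l : \bar R).

Lemma le_limn_esup_near u v :
  (\forall n \near \oo, u n <= v n) -> limn_esup u <= limn_esup v.
Proof.
move=> uv; apply: le_ereal_inf_tmp => _ [V FV <-].
apply: le_trans (ereal_inf_lbound _) _.
  by exists (V `&` [set n | u n <= v n]) => //; apply: filterI.
apply: ge_ereal_sup => _ [n [Vn uvn] <-]; apply: le_trans uvn _.
by apply: ereal_sup_ubound; exists n.
Qed.

Lemma limn_esup_cst l : limn_esup (fun=> l) = l.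
Proof. by rewrite is_cvg_limn_esupE ?lim_cst //; apply: cvg_cst. Qed.

Lemma limn_esup_le_near u l :
  (\forall n \near \oo, u n <= l) -> limn_esup u <= l.
Proof. by move=> ul; rewrite -(limn_esup_cst l); exact: le_limn_esup_near. Qed.

Lemma limn_esupDr u (c : R) :
  limn_esup (fun n => u n + c%:E) = limn_esup u + c%:E.
Proof.
rewrite -[LHS]oppeK -limn_einfN /comp.
rewrite (_ : (fun n => _) = fun n => (- c)%:E + (-%E \o u) n); last first.
  by apply/funext => n; rewrite oppeD ?fin_num_adde_defl // addeC.
have -> := @limn_einf_shift R (-%E \o u) (- c)%:E isT.
by rewrite limn_einfN oppeD ?fin_num_adde_defr // -EFinN opprK oppeK addeC.
Qed.

End limn_esup_lemmas.

Lemma cvge0_lt_near {R : realType} (T : Type) (F : set_system T) {FF : Filter F}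
    (f : T -> \bar R) (e : R) :
  f @ F --> 0%E -> 0 < e -> \forall t \near F, (f t < e%:E)%E.
Proof.
move=> f0 e0; apply: (f0 [set x | x < e%:E]%E).
by apply: open_ereal_lt'; rewrite lte_fin.
Qed.

Lemma exists_eps_mulr_le {R : realFieldType} (u g : R) : 0 <= u -> 0 < g ->
  exists2 eps, 0 < eps < 1 & u * eps <= g.
Proof.
move=> u_ge0 g_gt0; have u1_gt0 : 0 < u + 1 by lra.
exists (Num.min (1 / 2) (g / (u + 1))).
  apply/andP; split; first by rewrite lt_min; apply/andP; split; [lra|exact: divr_gt0].
  by rewrite gt_min; apply/orP; left; lra.
apply: le_trans (_ : (u + 1) * Num.min (1 / 2) (g / (u + 1)) <= g).
  by rewrite ler_wpM2r ?le_min ?divr_ge0 ?ltW //; lra.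
by rewrite -ler_pdivlMl // ge_min [_^-1 * g]mulrC lexx orbT.
Qed.

Section source.
Variables (R : realType) (X Y : countType).
Variable P : forall n : nat, n.-tuple X * n.-tuple Y -> R.

Local Notation surprisal x y := (log2 (1 / PXgY P x y)).

Definition ui_tail (u : R) : \bar R :=
  ereal_sup [set \esum_(z in [set z : R | u <= `|z|]) (PZ P n z * (`|z|)%:E)%E
     | n in [set n : nat | (0 < n)%N]].

Definition cond_tail n (x : n.-tuple X) (b : R) : \bar R :=
  \esum_(y in [set y | b < surprisal x y]) (PYgX P y x)%:E.

Definition condHx n (x : n.-tuple X) : \bar R :=
  \esum_(y in [set: n.-tuple Y]) (P (x, y) * surprisal x y)%:E.

Section block.
Variable n : nat.
Local Notation XYn := (n.-tuple X * n.-tuple Y)%type.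
Implicit Types (x : n.-tuple X) (y : n.-tuple Y) (p : XYn) (a b u eps : R).
Hypothesis P_ge0 : forall p, 0 <= @P n p.
Hypothesis esum_P : (\esum_(p in [set: XYn]) (P p)%:E = 1)%E.
Hypothesis PX_gt0 : forall x, 0 < PX P x.
Hypothesis PY_gt0 : forall y, 0 < PY P y.
Hypothesis n_gt0 : (0 < n)%N.

Local Open Scope ereal_scope.

Lemma esum_P_le1 (A : set XYn) : \esum_(p in A) (P p)%:E <= 1.
Proof. by rewrite -esum_P; apply: subset_le_esum => // p _; rewrite lee_fin. Qed.

Lemma PX_esum x : (PX P x)%:E = \esum_(y in [set: n.-tuple Y]) (P (x, y))%:E.
Proof.
have E : \esum_(y in [set: n.-tuple Y]) (P (x, y))%:E =
    \esum_(p in (pair x) @` [set: n.-tuple Y]) (P p)%:E.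
  by rewrite esum_image //= => y1 y2 _ _ [].
rewrite /PX fineK // E ge0_fin_numE ?(le_lt_trans (esum_P_le1 _)) ?ltry //.
by apply: esum_ge0 => p _; rewrite lee_fin.
Qed.

Lemma PY_esum y : (PY P y)%:E = \esum_(x in [set: n.-tuple X]) (P (x, y))%:E.
Proof.
have E : \esum_(x in [set: n.-tuple X]) (P (x, y))%:E =
    \esum_(p in (fun x => (x, y)) @` [set: n.-tuple X]) (P p)%:E.
  by rewrite esum_image //= => x1 x2 _ _ [].
rewrite /PY fineK // E ge0_fin_numE ?(le_lt_trans (esum_P_le1 _)) ?ltry //.
by apply: esum_ge0 => p _; rewrite lee_fin.
Qed.

Lemma esum_PX : \esum_(x in [set: n.-tuple X]) (PX P x)%:E = 1.
Proof.
rewrite -esum_P (@esum_pair_cond R _ _ (fun=> True)); last by move=> p; rewrite lee_fin.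
by apply: eq_esum => x _; rewrite PX_esum.
Qed.

Lemma esum_PXZl (c : R) : (0 <= c)%R ->
  \esum_(x in [set: n.-tuple X]) (c * PX P x)%:E = c%:E.
Proof.
move=> c0; under eq_esum do rewrite EFinM.
by rewrite ge0_esumZl // ?esum_PX ?mule1 // => x _; rewrite lee_fin ltW.
Qed.

Lemma P_le_PY x y : (P (x, y) <= PY P y)%R.
Proof.
rewrite -lee_fin PY_esum -(esum_set1 (a := fun x => (P (x, y))%:E)) ?lee_fin //.
by apply: subset_le_esum => // x' _; rewrite lee_fin.
Qed.

Lemma PXgY_ge0 x y : (0 <= PXgY P x y)%R.
Proof. by rewrite /PXgY divr_ge0 // ltW. Qed.

Lemma PXgY_le1 x y : (PXgY P x y <= 1)%R.
Proof. by rewrite /PXgY ler_pdivrMr // mul1r P_le_PY. Qed.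

Lemma surprisal_ge0 x y : (0 <= surprisal x y)%R.
Proof.
rewrite /log2 divr_ge0 //; last by rewrite ln_ge0 // ler1n.
have [q_gt0|q_le0] := ltP 0%R (PXgY P x y).
  by rewrite ln_ge0 // ler_pdivlMr // mul1r PXgY_le1.
have -> : PXgY P x y = 0%R by apply/eqP; rewrite eq_le q_le0 PXgY_ge0.
by rewrite invr0 mulr0 ln0.
Qed.

Lemma Zfun_ge0 p : (0 <= Zfun P p)%R.
Proof. by rewrite /Zfun mulr_ge0 // surprisal_ge0. Qed.

Lemma PX_cond_tail x b :
  (PX P x)%:E * cond_tail x b =
  \esum_(y in [set y | (b < surprisal x y)%R]) (P (x, y))%:E.
Proof.
rewrite -ge0_esumZl ?ltW //; last by move=> y _; rewrite lee_fin divr_ge0 // ltW.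
by apply: eq_esum => y _; rewrite -EFinM /PYgX mulrC divfK // gt_eqF.
Qed.

Lemma level_ge0_of_cond_tail eps x a : (eps < 1)%R ->
  cond_tail x a <= eps%:E -> (0 <= a)%R.
Proof.
move=> eps_lt1 tail_le; rewrite leNgt; apply/negP => a_lt0.
have all_y : [set y | (a < surprisal x y)%R] = [set: n.-tuple Y].
  by apply/seteqP; split => // y _; exact: lt_le_trans a_lt0 (surprisal_ge0 _ _).
have := lee_wpmul2l (ltW (PX_gt0 x) : 0 <= (PX P x)%:E) tail_le.
by rewrite PX_cond_tail all_y -PX_esum -EFinM lee_fin ler_pMr // leNgt eps_lt1.
Qed.

Lemma hbar_eps_ge0 eps x : (eps < 1)%R -> 0 <= hbar_eps P eps x.
Proof.
move=> eps_lt1; apply: le_ereal_inf_tmp => _ [a tail_le <-].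
by rewrite lee_fin; exact: level_ge0_of_cond_tail tail_le.
Qed.

Lemma hbar_eps_le eps x a : cond_tail x a <= eps%:E -> hbar_eps P eps x <= a%:E.
Proof. by move=> tail_le; apply: ereal_inf_lbound; exists a. Qed.

Lemma esum_PZ_tail u :
  \esum_(p in [set p : XYn | (u <= `|Zfun P p|)%R]) (P p * `|Zfun P p|)%:E =
  \esum_(z in [set z : R | (u <= `|z|)%R]) (PZ P n z * (`|z|)%:E).
Proof.
transitivity (\esum_(z in [set z : R | (u <= `|z|)%R])
   \esum_(p in [set p : XYn | Zfun P p = z]) (P p * `|z|)%:E); last first.
  apply: eq_esum => z _; rewrite /PZ muleC -ge0_esumZl //; last first.
    by move=> p _; rewrite lee_fin.
  by apply: eq_esum => p _; rewrite -EFinM mulrC.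
rewrite (esum_esum (a := fun z (p : XYn) => (P p * `|z|)%:E)); last first.
  by move=> z p _ _; rewrite lee_fin mulr_ge0.
set D := _ `*`` _.
have -> : [set p : XYn | (u <= `|Zfun P p|)%R] = snd @` D.
  apply/seteqP; split => [p /= up|_ [[z p] [/= uz zE] <-]].
    by exists (Zfun P p, p).
  by rewrite /= zE.
rewrite esum_image; last first.
  move=> [z1 p1] [z2 p2]; rewrite !inE /= => -[_ zE1] [_ zE2] p12.
  by rewrite /= in zE1 zE2 p12; rewrite -zE1 -zE2 p12.
by apply: eq_esum => -[z p] [/= _ <-].
Qed.

Lemma esum_PZ_tail_le_ui_tail u :
  \esum_(p in [set p : XYn | (u <= `|Zfun P p|)%R]) (P p * `|Zfun P p|)%:E <= ui_tail u.
Proof. by rewrite esum_PZ_tail; apply: ereal_sup_ubound; exists n. Qed.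

Lemma ui_tail_ge0 u : 0 <= ui_tail u.
Proof.
apply: le_trans (esum_PZ_tail_le_ui_tail u).
by apply: esum_ge0 => p _; rewrite lee_fin mulr_ge0.
Qed.

Lemma esum_PZfun_le (B : set XYn) u : (0 <= u)%R ->
  \esum_(p in B) (P p * Zfun P p)%:E <=
  u%:E * (\esum_(p in B) (@P n p)%:E) + ui_tail u.
Proof.
move=> u_ge0.
pose g (p : XYn) := (if (u <= `|Zfun P p|)%R then P p * `|Zfun P p| else 0)%R.
have g_ge0 p : (0 <= g p)%R by rewrite /g; case: ifP => // _; rewrite mulr_ge0.
apply: (@le_trans _ _ (\esum_(p in B) ((u * P p)%:E + (g p)%:E))).
  apply: le_esum => p _; rewrite -EFinD lee_fin /g ger0_norm ?Zfun_ge0 //.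
  case: ifPn => [_|]; first by rewrite lerDr mulr_ge0.
  by rewrite -ltNge addr0 mulrC => /ltW; apply: ler_wpM2r.
rewrite esumD; last 2 first.
- by move=> p _; rewrite lee_fin mulr_ge0.
- by move=> p _; rewrite lee_fin.
under eq_esum do rewrite EFinM.
rewrite ge0_esumZl // => [|p _]; last by rewrite lee_fin.
apply: leeD2l; apply: le_trans (esum_PZ_tail_le_ui_tail u).
apply: le_trans (subset_le_esum (B := setT) _ _) _ => // [p _|].
  by rewrite lee_fin.
rewrite [leRHS]esum_mkcond; apply: le_esum => p _.
by rewrite /g; case: ifPn => up; [rewrite mem_set|rewrite memNset //=; exact/negP].
Qed.

Lemma condHx_ge0 x : 0 <= condHx x.
Proof. by apply: esum_ge0 => y _; rewrite lee_fin mulr_ge0 // surprisal_ge0. Qed.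

Lemma esum_condHx (S : set (n.-tuple X)) :
  \esum_(x in S) condHx x =
  \esum_(p in [set p : XYn | S p.1]) (P p * surprisal p.1 p.2)%:E.
Proof.
by rewrite esum_pair_condl // => p; rewrite lee_fin mulr_ge0 // surprisal_ge0.
Qed.

Lemma condH_esum : condH P n = \esum_(x in [set: n.-tuple X]) condHx x.
Proof. by rewrite esum_condHx. Qed.

Lemma esum_P_surprisal (A : set XYn) :
  \esum_(p in A) (P p * surprisal p.1 p.2)%:E =
  n%:R%:E * \esum_(p in A) (P p * Zfun P p)%:E.
Proof.
rewrite -ge0_esumZl // => [|p _]; last by rewrite lee_fin mulr_ge0 // Zfun_ge0.
apply: eq_esum => p _; rewrite -EFinM /Zfun; congr EFin.
rewrite [RHS]mulrCA mulVKf //.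
by rewrite pnatr_eq0 -lt0n.
Qed.

Lemma cond_tail_markov x t : (0 <= t)%R ->
  t%:E * ((PX P x)%:E * cond_tail x t) <= condHx x.
Proof.
move=> t_ge0; rewrite PX_cond_tail -ge0_esumZl // => [|y _]; last by rewrite lee_fin.
apply: (@le_trans _ _ (\esum_(y in [set y | (t < surprisal x y)%R])
    (P (x, y) * surprisal x y)%:E)).
  by apply: le_esum => y /= tL; rewrite -EFinM lee_fin mulrC ler_wpM2l // ltW.
by apply: subset_le_esum => // y _; rewrite lee_fin mulr_ge0 // surprisal_ge0.
Qed.

Lemma PX_hbar_eps_le_condHx eps x : (0 < eps)%R ->
  (PX P x)%:E * hbar_eps P eps x <= (eps^-1)%:E * condHx x.
Proof.
move=> eps_gt0; have := condHx_ge0 x.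
case G: (condHx x) => [g| |] // g_ge0; last first.
  by rewrite gt0_muley ?leey // lte_fin invr_gt0.
rewrite lee_fin in g_ge0; apply/lee_addgt0Pr => gam gam_gt0.
set c := (g / eps + gam)%R.
have c_gt0 : (0 < c)%R by rewrite ltr_wpDl // divr_ge0 // ltW.
set t := (c / PX P x)%R.
have tPX : (t * PX P x = c)%R by rewrite divfK // gt_eqF.
have tail_le : cond_tail x t <= eps%:E.
  have := cond_tail_markov x (ltW (divr_gt0 c_gt0 (PX_gt0 x))).
  rewrite G muleA -EFinM tPX -lee_pdivlMl // => /le_trans; apply.
  rewrite -EFinM lee_fin ler_pdivrMl // mulrDl divfK ?gt_eqF //.
  by rewrite lerDl mulr_ge0 // ltW.
apply: le_trans (_ : (PX P x)%:E * t%:E <= _).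
  by apply: lee_wpmul2l; [rewrite lee_fin ltW|exact: hbar_eps_le].
by rewrite -EFinM -EFinD lee_fin mulrC tPX /c mulrC.
Qed.

Lemma Hs_eps_le_bad eps b : (0 < eps)%R -> (0 <= b)%R ->
  Hs_eps P n eps <=
  b%:E + (eps^-1)%:E *
    \esum_(x in [set x : n.-tuple X | eps%:E < cond_tail x b]) condHx x.
Proof.
move=> eps_gt0 b_ge0; rewrite esum_mkcond -(esum_PXZl b_ge0) -ge0_esumZl; last 2 first.
- by rewrite invr_ge0 ltW.
- by move=> x _; case: ifP => // _; exact: condHx_ge0.
rewrite -esumD; last 2 first.
- by move=> x _; rewrite lee_fin mulr_ge0 // ltW.
- move=> x _; apply: mule_ge0; first by rewrite lee_fin invr_ge0 ltW.
  by case: ifP => // _; exact: condHx_ge0.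
apply: le_esum => x _; have [bad|good] := pselect (eps%:E < cond_tail x b).
  rewrite mem_set // -[leLHS]add0e leeD ?PX_hbar_eps_le_condHx //.
  by rewrite lee_fin mulr_ge0 // ltW.
rewrite memNset // mule0 adde0 EFinM muleC.
apply: lee_wpmul2r; first by rewrite lee_fin ltW.
by apply: hbar_eps_le; rewrite leNgt; apply/negP.
Qed.

Lemma esum_P_bad_le eps b : (0 < eps)%R ->
  \esum_(p in [set p : XYn | eps%:E < cond_tail p.1 b]) (P p)%:E <=
  (eps^-1)%:E * \esum_(p in [set p : XYn | (b < surprisal p.1 p.2)%R]) (P p)%:E.
Proof.
move=> eps_gt0; have P_ge0E p : 0 <= (P p)%:E by rewrite lee_fin.
rewrite (@esum_pair_condl R _ _ [set x | eps%:E < cond_tail x b]) //.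
apply: (@le_trans _ _ (\esum_(x in [set x | eps%:E < cond_tail x b])
    ((eps^-1)%:E * \esum_(y in [set y | (b < surprisal x y)%R])
      (P (x, y))%:E))).
  apply: le_esum => x /= bad_x; rewrite -PX_esum -PX_cond_tail muleCA -[leLHS]mule1.
  apply: lee_wpmul2l; first by rewrite lee_fin ltW.
  by rewrite lee_pdivlMl // mule1 ltW.
rewrite esum_pair_cond //= -ge0_esumZl; last 2 first.
- by rewrite invr_ge0 ltW.
- by move=> x _; exact: esum_ge0.
apply: subset_le_esum => // x _.
by rewrite mule_ge0 ?esum_ge0 // lee_fin invr_ge0 ltW.
Qed.

Lemma Zfun_gt_surprisalE a :
  [set p : XYn | (a < Zfun P p)%R] =
  [set p : XYn | (n%:R * a < surprisal p.1 p.2)%R].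
Proof. by apply/seteqP; split => p; rewrite /= /Zfun ltr_pdivlMl // ltr0n. Qed.

Lemma Hs_eps_rate_le eps a u : (0 < eps)%R -> (0 <= a)%R -> (0 <= u)%R ->
  (n%:R^-1)%:E * Hs_eps P n eps <= a%:E + (eps^-1)%:E *
    ((u / eps)%:E * (\esum_(p in [set p : XYn | (a < Zfun P p)%R]) (P p)%:E) +
     ui_tail u).
Proof.
move=> eps_gt0 a_ge0 u_ge0; have nR_gt0 : (0 < n%:R :> R)%R by rewrite ltr0n.
set Q := \esum_(p in _) _; set W := _ + ui_tail u.
have W_ge0 : 0 <= W.
  apply: adde_ge0; last exact: ui_tail_ge0.
  apply: mule_ge0; first by rewrite lee_fin divr_ge0 // ltW.
  by apply: esum_ge0 => p _; rewrite lee_fin.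
have na_ge0 : (0 <= n%:R * a)%R by rewrite mulr_ge0 // ltW.
have bad_le :
    \esum_(x in [set x : n.-tuple X | eps%:E < cond_tail x (n%:R * a)]) condHx x <=
    n%:R%:E * W.
  rewrite esum_condHx esum_P_surprisal; apply: lee_wpmul2l; first by rewrite lee_fin.
  apply: le_trans (esum_PZfun_le _ u_ge0) _; apply: leeD2r.
  rewrite EFinM -muleA; apply: lee_wpmul2l; first by rewrite lee_fin.
  by rewrite /Q Zfun_gt_surprisalE; exact: esum_P_bad_le.
apply: le_trans (lee_wpmul2l _ (Hs_eps_le_bad eps_gt0 na_ge0)) _.
  by rewrite lee_fin invr_ge0.
apply: le_trans (lee_wpmul2l _ (leeD2l _ (lee_wpmul2l _ bad_le))) _.
- by rewrite lee_fin invr_ge0.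
- by rewrite lee_fin invr_ge0 ltW.
rewrite muleCA pmulVeDr ?lee_fin // ?mule_ge0 ?lee_fin ?invr_ge0 ?(ltW eps_gt0) //.
by rewrite -EFinM mulKf // gt_eqF.
Qed.

Lemma condHx_le_level x a : (0 <= a)%R ->
  condHx x <= (PX P x * a)%:E +
    \esum_(y in [set y | (a < surprisal x y)%R]) (P (x, y) * surprisal x y)%:E.
Proof.
move=> a_ge0; rewrite /condHx [X in _ <= _ + X]esum_mkcond mulrC EFinM PX_esum.
rewrite -ge0_esumZl // => [|y _]; last by rewrite lee_fin.
rewrite -esumD => [|y _|y _]; last 2 first.
- by rewrite lee_fin mulr_ge0.
- by case: ifP => // _; rewrite lee_fin mulr_ge0 // surprisal_ge0.
apply: le_esum => y _; rewrite -EFinM.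
have [aL|La] := ltP a (surprisal x y).
  by rewrite mem_set // -EFinD lee_fin lerDr mulr_ge0.
rewrite memNset ?adde0 ?lee_fin 1?mulrC ?ler_wpM2r //=.
by rewrite ltNge La.
Qed.

Lemma condH_le_levels (a : n.-tuple X -> R) : (forall x, 0 <= a x)%R ->
  condH P n <= \esum_(x in [set: n.-tuple X]) (PX P x * a x)%:E +
    \esum_(p in [set p : XYn | (a p.1 < surprisal p.1 p.2)%R])
      (P p * surprisal p.1 p.2)%:E.
Proof.
move=> a_ge0; rewrite condH_esum esum_pair_cond => [|p]; last first.
  by rewrite lee_fin mulr_ge0 // surprisal_ge0.
rewrite -esumD => [|x _|x _]; last 2 first.
- by rewrite lee_fin mulr_ge0 // ltW.
- by apply: esum_ge0 => y _; rewrite lee_fin mulr_ge0 // surprisal_ge0.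
by apply: le_esum => x _; exact: condHx_le_level.
Qed.

Lemma esum_P_above_levels_le eps (a : n.-tuple X -> R) : (0 <= eps)%R ->
  (forall x, cond_tail x (a x) <= eps%:E) ->
  \esum_(p in [set p : XYn | (a p.1 < surprisal p.1 p.2)%R]) (P p)%:E <= eps%:E.
Proof.
move=> eps_ge0 tail_le; rewrite esum_pair_cond => [|p]; last by rewrite lee_fin.
rewrite -(esum_PXZl eps_ge0); apply: le_esum => x _ /=.
by rewrite -PX_cond_tail EFinM muleC lee_wpmul2r ?lee_fin ?(ltW (PX_gt0 x)).
Qed.

Lemma Hs_eps_pinfty eps x : (eps < 1)%R -> hbar_eps P eps x = +oo ->
  Hs_eps P n eps = +oo.
Proof.
move=> eps_lt1 hx; apply/eqP; rewrite eq_le leey /=.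
have summand_ge0 x' : 0 <= (PX P x')%:E * hbar_eps P eps x'.
  by apply: mule_ge0; [rewrite lee_fin ltW|exact: hbar_eps_ge0].
rewrite -(gt0_muley (_ : 0 < (PX P x)%:E)) ?lte_fin // -hx.
rewrite -(esum_set1 (a := fun x => (PX P x)%:E * hbar_eps P eps x)) //.
exact: subset_le_esum.
Qed.

Lemma condH_le_Hs_eps eps u : (0 < eps < 1)%R -> (0 <= u)%R ->
  condH P n <= Hs_eps P n eps + n%:R%:E * ((u * eps)%:E + ui_tail u).
Proof.
move=> /andP[eps_gt0 eps_lt1] u_ge0; apply/lee_addgt0Pr => del del_gt0.
have [[x hx]|hbar_fin] := pselect (exists x, hbar_eps P eps x = +oo).
  have rest_ge0 : 0 <= n%:R%:E * ((u * eps)%:E + ui_tail u).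
    apply: mule_ge0; first by rewrite lee_fin.
    by rewrite adde_ge0 ?ui_tail_ge0 // lee_fin mulr_ge0 // ltW.
  rewrite (Hs_eps_pinfty eps_lt1 hx) !addye ?leey //.
  by rewrite -ltNye (lt_le_trans ltNy0 rest_ge0).
have near_hbar x :
    exists a, cond_tail x a <= eps%:E /\ a%:E < hbar_eps P eps x + del%:E.
  have hx_fin : hbar_eps P eps x \is a fin_num.
    rewrite ge0_fin_numE ?hbar_eps_ge0 // ltey; apply/negP => /eqP hx.
    by apply: hbar_fin; exists x.
  have : hbar_eps P eps x < hbar_eps P eps x + del%:E by rewrite lteDl // lte_fin.
  move=> /ereal_inf_lt[_ [a tail_le <-] a_lt].
  by exists a.
have /choice[a a_spec] := near_hbar.
have a_ge0 x : (0 <= a x)%R := level_ge0_of_cond_tail eps_lt1 (a_spec x).1.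
apply: le_trans (condH_le_levels a_ge0) _; rewrite addeAC.
apply: leeD.
  rewrite -(esum_PXZl (ltW del_gt0)) /Hs_eps -esumD => [|x _|x _]; last 2 first.
  - by apply: mule_ge0; [rewrite lee_fin ltW|exact: hbar_eps_ge0].
  - by rewrite lee_fin mulr_ge0 // ltW.
  apply: le_esum => x _; rewrite [(del * _)%R]mulrC !EFinM -ge0_muleDr //; last 2 first.
  - exact: hbar_eps_ge0.
  - by rewrite lee_fin ltW.
  by apply: lee_wpmul2l; [rewrite lee_fin ltW|exact: ltW (a_spec x).2].
rewrite esum_P_surprisal; apply: lee_wpmul2l; first by rewrite lee_fin.
apply: le_trans (esum_PZfun_le _ u_ge0) _; rewrite EFinM leeD2r //.
apply: lee_wpmul2l; first by rewrite lee_fin.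
by apply: esum_P_above_levels_le (ltW eps_gt0) _ => x; case: (a_spec x).
Qed.

Lemma condH_rate_le eps u : (0 < eps < 1)%R -> (0 <= u)%R ->
  (n%:R^-1)%:E * condH P n <=
  (n%:R^-1)%:E * Hs_eps P n eps + (u * eps)%:E + ui_tail u.
Proof.
move=> eps01 u_ge0; have nR_gt0 : (0 < n%:R :> R)%R by rewrite ltr0n.
have /andP[eps_gt0 eps_lt1] := eps01.
apply: le_trans (lee_wpmul2l _ (condH_le_Hs_eps eps01 u_ge0)) _.
  by rewrite lee_fin invr_ge0 ltW.
rewrite pmulVeDr ?addeA //.
- by apply: esum_ge0 => x _; apply: mule_ge0; [rewrite lee_fin ltW|exact: hbar_eps_ge0].
- by rewrite adde_ge0 ?ui_tail_ge0 // lee_fin mulr_ge0 // ltW.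
Qed.

End block.

Definition Hs_eps_limsup (eps : R) : \bar R :=
  limn_esup (fun n => (n%:R^-1)%:E * Hs_eps P n eps)%E.

Lemma hbar_eps_antimono n (x : n.-tuple X) (e1 e2 : R) : e1 <= e2 ->
  (hbar_eps P e2 x <= hbar_eps P e1 x)%E.
Proof.
move=> e12; apply: le_ereal_inf_tmp => _ [a tail_le <-].
by apply: ereal_inf_lbound; exists a => //; apply: le_trans tail_le _; rewrite lee_fin.
Qed.

Hypothesis source_P : is_source P.
Hypothesis marginals_P : marginals_positive P.
Hypothesis ui_P : uniformly_integrable P.

Local Open Scope ereal_scope.

Lemma Hs_eps_limsup_antimono (e1 e2 : R) : (e1 <= e2)%R ->
  Hs_eps_limsup e2 <= Hs_eps_limsup e1.
Proof.
move=> e12; apply/le_limn_esup_near/nearW => n; apply: lee_wpmul2l.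
  by rewrite lee_fin invr_ge0 ler0n.
apply: le_esum => x _; apply: lee_wpmul2l; last exact: hbar_eps_antimono.
by rewrite lee_fin ltW // (marginals_P n).1.
Qed.

Lemma Hs_sup : Hs P = ereal_sup (Hs_eps_limsup @` `]0%R, 1%R[).
Proof.
have Hs_mono : {in `]0%R, 1%R[ &, nonincreasing_fun Hs_eps_limsup}.
  by move=> e1 e2 _ _ /Hs_eps_limsup_antimono.
have bnd01 : (BRight (0%R : R) < BLeft (1%R : R))%O by rewrite bnd_simp.
by rewrite /Hs -(cvg_lim _ (nonincreasing_at_right_cvge _ bnd01 Hs_mono)).
Qed.

Lemma ui_tail_small (g : R) : (0 < g)%R -> exists2 u, (0 <= u)%R & ui_tail u < g%:E.
Proof.
move=> g_gt0; have [M [_ ui_M]] := cvge0_lt_near ui_P g_gt0.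
exists (Num.max M 0 + 1)%R; first by rewrite addr_ge0 // le_max lexx orbT.
by apply: ui_M; rewrite ltr_pwDr // le_max lexx.
Qed.

Lemma limsup_condH_le_Hs : limn_esup (fun n => (n%:R^-1)%:E * condH P n) <= Hs P.
Proof.
rewrite Hs_sup; apply/lee_addgt0Pr => g g_gt0.
have g2_gt0 : (0 < g / 2)%R by rewrite divr_gt0.
have [u u_ge0 ui_u] := ui_tail_small g2_gt0.
have [eps eps01 ueps] := exists_eps_mulr_le u_ge0 g2_gt0.
apply: le_trans (_ : _ <= Hs_eps_limsup eps + g%:E) _; last first.
  by rewrite leeD2r //; apply: ereal_sup_ubound; exists eps; rewrite ?in_itv.
rewrite /Hs_eps_limsup -limn_esupDr; apply: le_limn_esup_near; near=> n.
have [P_ge0 esum_P] := source_P n; have [PX_gt0 PY_gt0] := marginals_P n.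
have n_gt0 : (0 < n)%N by near: n; exists 1%N.
apply: le_trans (condH_rate_le P_ge0 esum_P PX_gt0 PY_gt0 n_gt0 eps01 u_ge0) _.
rewrite -addeA leeD2l // [g]splitr EFinD leeD // ?lee_fin //; exact: ltW.
Unshelve. all: by end_near.
Qed.

Lemma level_ge0_of_tail_cvg0 (a : R) :
  (fun n => \esum_(p in [set p | (a < Zfun P p)%R]) (@P n p)%:E) @ \oo --> 0 ->
  (0 <= a)%R.
Proof.
move=> tail0; rewrite leNgt; apply/negP => a_lt0.
have [N _ tail_small] := cvge0_lt_near tail0 ltr01.
have := tail_small N (leqnn N).
have [P_ge0 esum_P] := source_P N; have [_ PY_gt0] := marginals_P N.
have -> : [set p | (a < Zfun P p)%R] = [set: N.-tuple X * N.-tuple Y].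
  apply/seteqP; split => // p _.
  exact: lt_le_trans a_lt0 (Zfun_ge0 P_ge0 esum_P PY_gt0 p).
by rewrite esum_P ltxx.
Qed.

Lemma Hs_eps_limsup_le_Hbar (eps : R) : (0 < eps < 1)%R -> Hs_eps_limsup eps <= Hbar P.
Proof.
move=> /andP[eps_gt0 eps_lt1]; apply: le_ereal_inf_tmp => _ [a tail0 <-].
have a_ge0 := level_ge0_of_tail_cvg0 tail0.
apply/lee_addgt0Pr => g g_gt0; have g2_gt0 : (0 < g / 2)%R by rewrite divr_gt0.
have [u u_ge0 ui_u] := ui_tail_small (mulr_gt0 eps_gt0 g2_gt0).
have c_fin : (eps^-1 * (u / eps))%:E \is a fin_num by [].
have := cvgeZl c_fin tail0; rewrite mule0 => /cvge0_lt_near/(_ g2_gt0) tail_small.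
apply: limn_esup_le_near; near=> n.
have [P_ge0 esum_P] := source_P n; have [PX_gt0 PY_gt0] := marginals_P n.
have n_gt0 : (0 < n)%N by near: n; exists 1%N.
apply: le_trans (Hs_eps_rate_le P_ge0 esum_P PX_gt0 PY_gt0 n_gt0 eps_gt0 a_ge0 u_ge0) _.
rewrite leeD2l // ge0_muleDr; last 2 first.
- apply: mule_ge0; first by rewrite lee_fin divr_ge0 // ltW.
  by apply: esum_ge0 => p _; rewrite lee_fin.
- exact: ui_tail_ge0 P_ge0 n_gt0 u.
rewrite muleA -EFinM [g]splitr EFinD leeD //; first by apply: ltW; near: n.
by rewrite lee_pdivrMl // ltW.
Unshelve. all: by end_near.
Qed.

Lemma Hs_le_Hbar : Hs P <= Hbar P.
Proof.
rewrite Hs_sup; apply: ge_ereal_sup => _ [eps eps01 <-].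
by apply: Hs_eps_limsup_le_Hbar; move: eps01; rewrite /= in_itv.
Qed.

End source.

Theorem theorem8 (R : realType) (X Y : countType)
  (P : forall n : nat, n.-tuple X * n.-tuple Y -> R) :
  is_source P -> marginals_positive P -> uniformly_integrable P ->
  (limn_esup (fun n => (n%:R^-1)%:E * condH P n)%E <= Hs P)%E /\
  (Hs P <= Hbar P)%E.
Proof.
move=> source_P marginals_P ui_P.
by split; [exact: limsup_condH_le_Hs|exact: Hs_le_Hbar].
Qed.
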